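(* Let $r\ge 0$, let $l_1,\ldots,l_r,\theta_1,\ldots,\theta_r,L$ be real numbers, $u_j=l_j+i\theta_j$, and for $z=x+iy$ ($x,y$ real) let $$A(z)=\begin{pmatrix}\cos y & -e^{x}\sin y\\ -e^{-x}\sin y & -\cos y\end{pmatrix},\qquad \Gamma_L=\begin{pmatrix}e^{L/2}&0\\0&e^{-L/2}\end{pmatrix}.$$ Then $$\operatorname{Tr}\big(A(u_1)A(u_2)\cdots A(u_r)\Gamma_L\big)=\sum_{I\subseteq\{1,\ldots,r\},\ |I|\text{ even}}(-1)^{s(I)}\sin(\theta_I)\cos(\theta_{\hat I})\big(e^{L/2-L_I}+(-1)^r e^{L_I-L/2}\big).$$ Equivalently, the right-hand side equals $\sum_{|I|\text{ even}}(-1)^{s(I)}2\sin(\theta_I)\cos(\theta_{\hat I})\cosh(L/2-L_I)$ when $r$ is even and $\sum_{|I|\text{ even}}(-1)^{s(I)}2\sin(\theta_I)\cos(\theta_{\hat I})\sinh(L/2-L_I)$ when $r$ is odd. (For $r=0$ the product of the $A$'s is the identity.)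
   Context: For a subset $I=\{i_1<\cdots<i_k\}\subseteq\{1,\ldots,r\}$ with $k$ even: $L_I=\sum_{j=1}^k(-1)^j l_{i_j}=-l_{i_1}+l_{i_2}-\cdots+l_{i_k}$; $s(I)=\sum_{m=1}^{k/2}(i_{2m}-i_{2m-1}+1)$; $\sin(\theta_I)=\prod_{i\in I}\sin\theta_i$; $\cos(\theta_{\hat I})=\prod_{i\in\{1,\ldots,r\}\setminus I}\cos\theta_i$. Empty products equal $1$, and for $I=\emptyset$, $L_I=0$ and $s(I)=0$. *)

From Stdlib Require Import Reals List Arith.
Import ListNotations.
Open Scope R_scope.

Record M2 := mkM2 { m11 : R; m12 : R; m21 : R; m22 : R }.

Definition M2mul (A B : M2) : M2 :=
  mkM2 (m11 A * m11 B + m12 A * m21 B) (m11 A * m12 B + m12 A * m22 B)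
       (m21 A * m11 B + m22 A * m21 B) (m21 A * m12 B + m22 A * m22 B).

Definition M2id : M2 := mkM2 1 0 0 1.

Definition M2tr (A : M2) : R := m11 A + m22 A.

Definition Amat (x y : R) : M2 :=
  mkM2 (cos y) (- exp x * sin y) (- exp (- x) * sin y) (- cos y).

Definition Gamma (L : R) : M2 := mkM2 (exp (L / 2)) 0 0 (exp (- (L / 2))).

(* A(u_1) A(u_2) ... A(u_r), with u_j = l j + i th j; identity for r = 0 *)
Definition Aprod (r : nat) (l th : nat -> R) : M2 :=
  fold_right (fun j P => M2mul (Amat (l j) (th j)) P) M2id (seq 1 r).

(* all sublists of s (as increasing lists when s is increasing) *)
Fixpoint powerset (s : list nat) : list (list nat) :=
  match s with
  | [] => [[]]
  | x :: t => map (cons x) (powerset t) ++ powerset t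
  end.

(* subsets of {1,...,r}, each given by its increasing list i_1 < ... < i_k *)
Definition subsets (r : nat) : list (list nat) := powerset (seq 1 r).

Fixpoint LI (l : nat -> R) (I : list nat) : R :=
  match I with
  | a :: b :: t => - l a + l b + LI l t
  | [a] => - l a
  | [] => 0
  end.

Fixpoint sI (I : list nat) : nat :=
  match I with
  | a :: b :: t => (b - a + 1 + sI t)%nat
  | _ => 0%nat
  end.

Definition prodR (f : nat -> R) (s : list nat) : R :=
  fold_right (fun i acc => f i * acc) 1 s.

Definition sinI (th : nat -> R) (I : list nat) : R := prodR (fun i => sin (th i)) I.

Definition cosIc (r : nat) (th : nat -> R) (I : list nat) : R :=
  prodR (fun i => cos (th i))
        (filter (fun i => negb (existsb (Nat.eqb i) I)) (seq 1 r)).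

Definition sum_even (r : nat) (F : list nat -> R) : R :=
  fold_right Rplus 0
    (map F (filter (fun I => Nat.even (length I)) (subsets r))).

(* Write A(x + iy) = cos y D + sin y N(x) with D = diag(1, -1) and N(x) the
   off-diagonal part.  Expanding the product, a subset I of positions picks
   the factors sin(theta_i) N(l_i); since D N = - N D the D's can be moved to
   the right, and N(x) N(y) = diag(e^(x-y), e^(y-x)), so consecutive pairs of
   I contribute exp(-L_I) and exp(L_I) on the diagonal.  Counting the
   anticommutations gives the sign (-1)^s(I).  The proof is an induction on
   the number of factors that peels off the leftmost one and tracks all four
   entries at once. *)

From Stdlib Require Import Reals List Lia.
Import ListNotations.
Open Scope R_scope.

Definition subset_sum (S : list (list nat)) (F : list nat -> R) : R :=
  fold_right Rplus 0 (map F S).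

Lemma subset_sum_ext_in S F G :
  (forall I, In I S -> F I = G I) -> subset_sum S F = subset_sum S G.
Proof. intro H; unfold subset_sum; f_equal; apply map_ext_in; auto. Qed.

Lemma subset_sum_lin S c d F G :
  c * subset_sum S F + d * subset_sum S G = subset_sum S (fun I => c * F I + d * G I).
Proof. unfold subset_sum; induction S; simpl; [ring | rewrite <- IHS; ring]. Qed.

Lemma subset_sum_filter (p : list nat -> bool) S F :
  fold_right Rplus 0 (map F (filter p S)) = subset_sum S (fun I => if p I then F I else 0).
Proof.
  unfold subset_sum; induction S as [|I S IH]; simpl; auto.
  destruct (p I); simpl; rewrite IH; ring.
Qed.

Lemma subset_sum_app S T F : subset_sum (S ++ T) F = subset_sum S F + subset_sum T F.
Proof. unfold subset_sum; induction S; simpl; [ring | rewrite IHS; ring]. Qed.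

Lemma subset_sum_plus S F G :
  subset_sum S F + subset_sum S G = subset_sum S (fun I => F I + G I).
Proof. unfold subset_sum; induction S; simpl; [ring | rewrite <- IHS; ring]. Qed.

Lemma subset_sum_powerset_cons a s F :
  subset_sum (powerset (a :: s)) F = subset_sum (powerset s) (fun I => F (a :: I) + F I).
Proof.
  simpl; rewrite subset_sum_app, <- subset_sum_plus.
  unfold subset_sum; rewrite map_map; reflexivity.
Qed.

Lemma powerset_incl s I : In I (powerset s) -> incl I s.
Proof.
  revert I; induction s as [|b t IH]; simpl; intros I HI.
  - destruct HI as [<- | []]; apply incl_nil_l.
  - apply in_app_or in HI; destruct HI as [HI | HI].
    + apply in_map_iff in HI; destruct HI as [J [<- HJ]].
      apply incl_cons; [left; reflexivity | apply incl_tl, IH, HJ].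
    + apply incl_tl, IH, HI.
Qed.

Lemma LI_cons l a I : LI l (a :: I) = - l a - LI l I.
Proof.
  revert a; induction I as [|b I IH]; intro a; [simpl; ring |].
  change (LI l (a :: b :: I)) with (- l a + l b + LI l I); rewrite (IH b); ring.
Qed.

(* For odd I the head b is paired with a phantom index a - 1, which is what it
   gets paired with once a is prepended; hence the sign (-1)^(b - a + s(J)). *)
Definition pairing_sign (a : nat) (I : list nat) : R :=
  match I with
  | [] => 1
  | b :: J => if Nat.even (length I) then (-1) ^ sI I else (-1) ^ (b - a + sI J)
  end.

Lemma pairing_sign_even a I : Nat.even (length I) = true -> pairing_sign a I = (-1) ^ sI I.
Proof. destruct I; simpl; intro E; [reflexivity | rewrite E; reflexivity]. Qed.

Definition parity_sign (I : list nat) : R := if Nat.even (length I) then 1 else -1.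

Section AboveIndex.
Variables (a : nat) (I : list nat).
Hypothesis I_above : forall x, In x I -> (S a <= x)%nat.

Lemma pairing_sign_succ : pairing_sign a I = parity_sign I * pairing_sign (S a) I.
Proof.
  unfold parity_sign; destruct I as [|b J]; [simpl; ring |].
  unfold pairing_sign; destruct (Nat.even (length (b :: J))); [ring |].
  assert (S a <= b)%nat by (apply I_above; left; reflexivity).
  replace (b - a)%nat with (S (b - S a)) by lia; simpl; ring.
Qed.

Lemma pairing_sign_cons : pairing_sign a (a :: I) = pairing_sign (S a) I.
Proof.
  destruct I as [|b J]; [simpl; rewrite Nat.sub_diag; simpl; ring |].
  assert (S a <= b)%nat by (apply I_above; left; reflexivity).
  unfold pairing_sign.
  change (length (a :: b :: J)) with (S (S (length J))).
  change (sI (a :: b :: J)) with (b - a + 1 + sI J)%nat.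
  change (length (b :: J)) with (S (length J)).
  rewrite Nat.even_succ, Nat.odd_succ, Nat.even_succ, <- Nat.negb_even.
  destruct (Nat.even (length J)); simpl negb; cbv iota.
  - replace (b - a + 1 + sI J)%nat with (2 + (b - S a + sI J))%nat by lia.
    rewrite pow_add; simpl; ring.
  - rewrite Nat.sub_diag; reflexivity.
Qed.
End AboveIndex.

Definition cos_compl (s : list nat) (th : nat -> R) (I : list nat) : R :=
  prodR (fun i => cos (th i)) (filter (fun i => negb (existsb (Nat.eqb i) I)) s).

Lemma cos_compl_cons_out a s th I : (forall x, In x I -> (S a <= x)%nat) ->
  cos_compl (a :: s) th I = cos (th a) * cos_compl s th I.
Proof.
  intro I_above; unfold cos_compl; simpl.
  destruct (existsb (Nat.eqb a) I) eqn:E; [| reflexivity].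
  apply existsb_exists in E; destruct E as [x [Hx Hax]].
  apply Nat.eqb_eq in Hax; subst; specialize (I_above _ Hx); lia.
Qed.

Lemma cos_compl_cons_in a s th I : (forall x, In x s -> (S a <= x)%nat) ->
  cos_compl (a :: s) th (a :: I) = cos_compl s th I.
Proof.
  intro s_above; unfold cos_compl; simpl; rewrite Nat.eqb_refl; simpl.
  f_equal; apply filter_ext_in; intros x Hx.
  specialize (s_above _ Hx).
  destruct (Nat.eqb x a) eqn:E; [apply Nat.eqb_eq in E; lia | reflexivity].
Qed.

Section Expansion.
Variables (l th : nat -> R).

Definition Aprod_from (a n : nat) : M2 :=
  fold_right (fun j P => M2mul (Amat (l j) (th j)) P) M2id (seq a n).

Definition weight (a : nat) (s I : list nat) : R :=
  pairing_sign a I * sinI th I * cos_compl s th I.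

Definition expansion (a n : nat) : M2 :=
  let s := seq a n in
  let even_sum F := subset_sum (powerset s)
                      (fun I => if Nat.even (length I) then F I else 0) in
  let odd_sum F := subset_sum (powerset s)
                      (fun I => if Nat.even (length I) then 0 else F I) in
  mkM2 (even_sum (fun I => weight a s I * exp (- LI l I)))
       (odd_sum (fun I => (-1) ^ n * weight a s I * exp (- LI l I)))
       (odd_sum (fun I => - (weight a s I * exp (LI l I))))
       (even_sum (fun I => (-1) ^ n * weight a s I * exp (LI l I))).

Lemma expansion_step a n :
  M2mul (Amat (l a) (th a)) (expansion (S a) n) = expansion a (S n).
Proof.
  unfold expansion, M2mul, Amat; cbn [m11 m12 m21 m22].
  change (seq a (S n)) with (a :: seq (S a) n).
  rewrite !subset_sum_lin, !subset_sum_powerset_cons.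
  assert (s_above : forall x, In x (seq (S a) n) -> (S a <= x)%nat)
    by (intros x Hx; apply in_seq in Hx; lia).
  f_equal; apply subset_sum_ext_in; intros I HI.
  all: assert (I_above : forall x, In x I -> (S a <= x)%nat)
         by (intros x Hx; apply s_above, (powerset_incl _ _ HI), Hx).
  all: unfold weight; rewrite (pairing_sign_cons a I I_above),
         (pairing_sign_succ a I I_above), (cos_compl_cons_in a _ th I s_above),
         (cos_compl_cons_out a _ th I I_above), LI_cons.
  all: change (sinI th (a :: I)) with (sin (th a) * sinI th I);
       change (length (a :: I)) with (S (length I)).
  all: unfold parity_sign; rewrite Nat.even_succ, <- Nat.negb_even.
  all: destruct (Nat.even (length I)); simpl negb; cbv iota.
  all: unfold Rminus; rewrite ?Ropp_plus_distr, ?Ropp_involutive, ?exp_plus, ?exp_Ropp.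
  all: simpl pow; field; repeat split; apply Rgt_not_eq, exp_pos.
Qed.

Lemma Aprod_from_expansion a n : Aprod_from a n = expansion a n.
Proof.
  revert a; induction n as [|n IH]; intro a.
  - unfold Aprod_from, expansion, weight, cos_compl, subset_sum; simpl.
    rewrite Ropp_0, exp_0; unfold M2id; f_equal; ring.
  - change (Aprod_from a (S n)) with (M2mul (Amat (l a) (th a)) (Aprod_from (S a) n)).
    rewrite IH; apply expansion_step.
Qed.
End Expansion.

Lemma trace_Aprod_Gamma r l th L :
  M2tr (M2mul (Aprod r l th) (Gamma L)) =
    sum_even r (fun I => (-1) ^ sI I * sinI th I * cosIc r th I *
                   (exp (L / 2 - LI l I) + (-1) ^ r * exp (LI l I - L / 2))).
Proof.
  change (Aprod r l th) with (Aprod_from l th 1 r); rewrite Aprod_from_expansion.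
  unfold M2tr, M2mul, Gamma, expansion; cbn [m11 m12 m21 m22].
  rewrite !Rmult_0_r, Rplus_0_r, Rplus_0_l, !(Rmult_comm (subset_sum _ _)).
  rewrite subset_sum_lin; unfold sum_even, subsets; rewrite subset_sum_filter.
  apply subset_sum_ext_in; intros I _.
  destruct (Nat.even (length I)) eqn:E; [| ring].
  unfold weight; rewrite (pairing_sign_even 1 I E).
  unfold Rminus; rewrite !exp_plus; unfold cosIc, cos_compl; ring.
Qed.

Lemma sum_even_ext r F G : (forall I, F I = G I) -> sum_even r F = sum_even r G.
Proof. intro H; unfold sum_even; f_equal; apply map_ext, H. Qed.

Theorem mainTheorem2 (r : nat) (l th : nat -> R) (L : R) :
  M2tr (M2mul (Aprod r l th) (Gamma L)) =
    sum_even r (fun I => (-1) ^ sI I * sinI th I * cosIc r th I *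
                   (exp (L / 2 - LI l I) + (-1) ^ r * exp (LI l I - L / 2)))
  /\ (Nat.Even r ->
      sum_even r (fun I => (-1) ^ sI I * sinI th I * cosIc r th I *
                   (exp (L / 2 - LI l I) + (-1) ^ r * exp (LI l I - L / 2)))
      = sum_even r (fun I => (-1) ^ sI I * 2 * sinI th I * cosIc r th I *
                   cosh (L / 2 - LI l I)))
  /\ (Nat.Odd r ->
      sum_even r (fun I => (-1) ^ sI I * sinI th I * cosIc r th I *
                   (exp (L / 2 - LI l I) + (-1) ^ r * exp (LI l I - L / 2)))
      = sum_even r (fun I => (-1) ^ sI I * 2 * sinI th I * cosIc r th I *
                   sinh (L / 2 - LI l I))).
Proof.
  split; [apply trace_Aprod_Gamma | split]; intros [k ->]; apply sum_even_ext; intro I;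
    replace (LI l I - L / 2) with (- (L / 2 - LI l I)) by ring.
  - rewrite pow_1_even; unfold cosh; field.
  - rewrite Nat.add_1_r, pow_1_odd; unfold sinh; field.
Qed.
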